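(* Consider the optimisation problem of choosing a set of bins $\{\Delta_b\}_{b=1}^{B}$ (disjoint intervals whose union is $[0,1]$, with $B$ arbitrary) that minimises $\sum_{b=1}^{B} \frac{N_b}{N}\,\mathrm{D}(\mathcal{D}_b^y,\widehat{P}_b)$ subject to $\widehat{P}_1 \le \dots \le \widehat{P}_B$, where $\mathrm{D}(\mathcal{D}_b^y,\widehat{P}_b) = \frac{1}{N_b}\sum_{y_i\in\mathcal{D}_b^y}(y_i-\widehat{P}_b)^2$ is the within-bin variance. The minimum of this problem is attained at the bins computed as follows: sort the labels $\{y_i\}_{i=1}^N$ in ascending order of the model predictions $\{P_\theta(x_i)\}_{i=1}^N$; apply the pool-adjacent-violators algorithm (PAVA), i.e. monotonic regression under the squared error $\sum_{i=1}^N(\widehat{y}_i-y_i)^2$, to obtain a monotonically increasing fitted sequence $\{\widehat{y}_i\}_{i=1}^N$; and place a bin boundary at $(P_\theta(x_{i-1})+P_\theta(x_i))/2$ for every $i$ with $\widehat{y}_{i-1}\ne\widehat{y}_i$ (the first bin starting at $0$ and the last bin ending at $1$).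
   Context: Binary classification with data $\mathcal{D}=\{(x_i,y_i)\}_{i=1}^N$, $y_i\in\{0,1\}$, and a probabilistic classifier $P_\theta:\mathcal{X}\to[0,1]$. For a set of bins $\{\Delta_b\}_{b=1}^B$, the data subsets are $\mathcal{D}_b=\{(x_i,y_i)\in\mathcal{D}\mid P_\theta(x_i)\in\Delta_b\}$, with label set $\mathcal{D}_b^y$, size $N_b$, and empirical probability $\widehat{P}_b=\frac{1}{N_b}\sum_{y_i\in\mathcal{D}_b^y}y_i$. It is assumed that the solution of the optimisation problem is not the trivial single bin $\{[0,1]\}$. *)

From HB Require Import structures.
From mathcomp Require Import all_boot all_order all_algebra.
Set Implicit Arguments. Unset Strict Implicit. Unset Printing Implicit Defensive.
Import Order.TTheory GRing.Theory Num.Theory.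
Local Open Scope ring_scope.

Section Binning.
Variable R : realFieldType.

Definition itv01 : interval R := `[0, 1].

Definition yv (N : nat) (y : 'I_N -> bool) (i : 'I_N) : R := (nat_of_bool (y i))%:R.

Definition Nb (N : nat) (p : 'I_N -> R) (I : interval R) : nat :=
  #|[pred i : 'I_N | p i \in I]|.

(* empirical probability P^_b (value 0 for an empty bin, by x/0 = 0) *)
Definition Phat (N : nat) (p : 'I_N -> R) (y : 'I_N -> bool) (I : interval R) : R :=
  (\sum_(i | p i \in I) yv y i) / (Nb p I)%:R.

Definition Dvar (N : nat) (p : 'I_N -> R) (y : 'I_N -> bool) (I : interval R) : R :=
  (\sum_(i | p i \in I) (yv y i - Phat p y I) ^+ 2) / (Nb p I)%:R.

Definition objective (N : nat) (p : 'I_N -> R) (y : 'I_N -> bool)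
    (bins : seq (interval R)) : R :=
  \sum_(I <- bins) ((Nb p I)%:R / N%:R * Dvar p y I).

Definition is_binning (bins : seq (interval R)) : Prop :=
  [/\ forall x : R, x \in itv01 <->
        exists2 b, (b < size bins)%N & x \in nth itv01 bins b,
      forall b b' (x : R), (b < size bins)%N -> (b' < size bins)%N ->
        x \in nth itv01 bins b -> x \in nth itv01 bins b' -> b = b'
    & forall b b' (x x' : R), (b < b')%N -> (b' < size bins)%N ->
        x \in nth itv01 bins b -> x' \in nth itv01 bins b' -> x < x'].

(* monotonicity constraint P^_1 <= ... <= P^_B (imposed on bins that contain
   data, since P^_b is only defined when N_b > 0) *)
Definition monotone_bins (N : nat) (p : 'I_N -> R) (y : 'I_N -> bool)
    (bins : seq (interval R)) : Prop :=
  forall b b', (b < b')%N -> (b' < size bins)%N ->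
    (0 < Nb p (nth itv01 bins b))%N -> (0 < Nb p (nth itv01 bins b'))%N ->
    Phat p y (nth itv01 bins b) <= Phat p y (nth itv01 bins b').

Definition feasible (N : nat) (p : 'I_N -> R) (y : 'I_N -> bool)
    (bins : seq (interval R)) : Prop :=
  is_binning bins /\ monotone_bins p y bins.

Definition is_optimal (N : nat) (p : 'I_N -> R) (y : 'I_N -> bool)
    (bins : seq (interval R)) : Prop :=
  feasible p y bins /\
  forall bins', feasible p y bins' -> objective p y bins <= objective p y bins'.

(* A block is (sum of its labels, number of its elements); the stack holds the
   blocks built so far, most recent first. *)
Definition bmean (b : R * nat) : R := b.1 / (b.2)%:R.

Fixpoint pava_push (b : R * nat) (stk : seq (R * nat)) : seq (R * nat) :=
  match stk with
  | [::] => [:: b]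
  | c :: stk' =>
      if bmean b < bmean c then pava_push (b.1 + c.1, (b.2 + c.2)%N) stk'
      else b :: stk
  end.

Definition pava_blocks (ys : seq R) : seq (R * nat) :=
  rev (foldl (fun stk v => pava_push (v, 1%N) stk) [::] ys).

Definition pava (ys : seq R) : seq R :=
  flatten [seq nseq b.2 (bmean b) | b <- pava_blocks ys].

Definition sorted_idx (N : nat) (p : 'I_N -> R) : seq 'I_N :=
  sort (fun i j => p i <= p j) (enum 'I_N).

Fixpoint mk_bins (a : R) (cs : seq R) : seq (interval R) :=
  match cs with
  | [::] => [:: (`[a, 1] : interval R) ]
  | c :: cs' => (`[a, c[ : interval R) :: mk_bins c cs'
  end.

Definition pava_bins (N : nat) (p : 'I_N -> R) (y : 'I_N -> bool) : seq (interval R) :=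
  let s := sorted_idx p in
  let ps := [seq p i | i <- s] in
  let yhat := pava [seq yv y i | i <- s] in
  let cs := [seq (ps`_k.-1 + ps`_k) / 2 | k <- iota 1 N.-1 & yhat`_k.-1 != yhat`_k] in
  mk_bins 0 cs.

End Binning.

From HB Require Import structures.
From mathcomp Require Import all_boot all_order all_algebra.
From mathcomp Require Import ring lra zify.
Set Implicit Arguments. Unset Strict Implicit. Unset Printing Implicit Defensive.
Import Order.TTheory GRing.Theory Num.Theory.
Local Open Scope ring_scope.

(* Sort the data by prediction.  A binning then cuts the sorted labels into
   consecutive runs, and for a feasible binning the values P^_b of the bins of
   the points, read in sorted order, form a nondecreasing sequence.  As P^_b is
   the mean of its bin, the objective is the mean squared distance from the
   labels to that sequence, so no feasible binning beats isotonic regression.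
   PAVA attains it: every block it pools has all its prefix means at least the
   block mean, and by summation by parts such a block is fitted best, among
   nondecreasing sequences, by its constant mean.  The PAVA bins group exactly
   the points with equal fitted value, so their P^_b are the fitted values. *)

Section PoolAdjacentViolators.
Variable R : realFieldType.
Implicit Types (b c f L u v ys : seq R) (m : R) (stk B : seq (seq R)).

Definition sqdist u v : R := \sum_(xz <- zip u v) (xz.1 - xz.2) ^+ 2.

Lemma sqdist_cat u1 u2 v1 v2 : size u1 = size v1 ->
  sqdist (u1 ++ u2) (v1 ++ v2) = sqdist u1 v1 + sqdist u2 v2.
Proof. by move=> eq_sz; rewrite /sqdist zip_cat // big_cat. Qed.

Lemma zip_nseqr (T U : Type) (s : seq T) (u : U) :
  zip s (nseq (size s) u) = [seq (x, u) | x <- s].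
Proof. by elim: s => //= x s ->. Qed.

Lemma sqdist_nseq L m : sqdist L (nseq (size L) m) = \sum_(x <- L) (x - m) ^+ 2.
Proof. by rewrite /sqdist zip_nseqr big_map. Qed.

Lemma big_zip_fst (F : R -> R) u v : (size u <= size v)%N ->
  \sum_(xz <- zip u v) F xz.1 = \sum_(x <- u) F x.
Proof. by move=> le_uv; rewrite -[in RHS](unzip1_zip le_uv) big_map. Qed.

Lemma sumr_subr_const L m :
  \sum_(x <- L) (x - m) = \sum_(x <- L) x - (size L)%:R * m.
Proof. by rewrite sumrB big_const_seq count_predT iter_addr_0 mulr_natl. Qed.

Definition block_stat L : R * nat := (\sum_(x <- L) x, size L).

Definition mean L : R := bmean (block_stat L).

Lemma mulr_size_mean L : (size L)%:R * mean L = \sum_(x <- L) x.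
Proof.
case: L => [|x L]; first by rewrite big_nil mul0r.
by rewrite /mean /bmean /= mulrC divfK // pnatr_eq0.
Qed.

Lemma sumr_sub_mean L : \sum_(x <- L) (x - mean L) = 0.
Proof. by rewrite sumr_subr_const mulr_size_mean subrr. Qed.

Definition prefix_means_ge L : Prop :=
  (0 < size L)%N /\
  forall j, (size (take j L))%:R * mean L <= \sum_(x <- take j L) x.

Lemma prefix_means_ge_cat c b : prefix_means_ge c -> prefix_means_ge b ->
  mean b < mean c -> prefix_means_ge (c ++ b).
Proof.
move=> [c_gt0 c_pre] [b_gt0 b_pre] lt_bc.
split=> [|j]; first by rewrite size_cat addn_gt0 c_gt0.
set m := mean (c ++ b).
have mean_cat :
    ((size c)%:R + (size b)%:R) * m = (size c)%:R * mean c + (size b)%:R * mean b.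
  by rewrite -natrD -size_cat !mulr_size_mean big_cat.
have c_pos : 0 < (size c)%:R :> R by rewrite ltr0n.
have b_pos : 0 < (size b)%:R :> R by rewrite ltr0n.
have le_mc : m <= mean c by nra.
have le_bm : mean b <= m by nra.
rewrite take_cat; case: ifP => _.
  have := c_pre j; have := ler0n R (size (take j c)); nra.
set t := take _ b; have := b_pre (j - size c)%N; rewrite -/t => b_t.
have le_tb : (size t)%:R <= (size b)%:R :> R by rewrite ler_nat size_take_min geq_minr.
have : 0 <= ((size b)%:R - (size t)%:R) * (m - mean b).
  by apply: mulr_ge0; rewrite subr_ge0.
rewrite size_cat natrD big_cat /= -mulr_size_mean; nra.
Qed.

Lemma prefix_means_ge1 (x : R) : prefix_means_ge [:: x].
Proof.
have mean1 : mean [:: x] = x by rewrite /mean /bmean /= big_seq1 divr1.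
split=> // -[|j]; first by rewrite big_nil mul0r.
by rewrite /= big_seq1 mean1 mul1r.
Qed.

(* [a] is the excess carried over from the part of the block already consumed. *)
Lemma summation_by_parts_le m (a : R) L f : 0 <= a ->
  (forall j, 0 <= a + \sum_(x <- take j L) (x - m)) ->
  a + \sum_(x <- L) (x - m) = 0 -> sorted <=%R f -> size f = size L ->
  \sum_(xz <- zip L f) (xz.1 - m) * xz.2 <= - (a * head 0 f).
Proof.
elim: L a f => [|x L IH] a [|z f] //= a_ge0 pre total f_sorted size_f.
  by rewrite big_nil mulr0 oppr0.
case: size_f => size_f.
rewrite big_cons /=; set a' := a + (x - m).
have a'_ge0 : 0 <= a' by have := pre 1%N; rewrite /= take0 big_seq1.
have pre' j : 0 <= a' + \sum_(x <- take j L) (x - m).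
  by have := pre j.+1; rewrite /= big_cons addrA.
have total' : a' + \sum_(x <- L) (x - m) = 0 by move: total; rewrite big_cons addrA.
have := IH a' f a'_ge0 pre' total' (path_sorted f_sorted) size_f.
have : a' * z <= a' * head 0 f.
  case: f size_f f_sorted {IH} => [|z' f] /= size_f.
    by move: total'; rewrite (size0nil (esym size_f)) big_nil addr0 => ->; rewrite !mul0r.
  by move=> /andP [le_zz' _]; apply: ler_wpM2l.
rewrite /a'; nra.
Qed.

Lemma block_mean_fit_le L f : prefix_means_ge L -> sorted <=%R f ->
  size f = size L -> sqdist L (nseq (size L) (mean L)) <= sqdist L f.
Proof.
move=> [_ pre] f_sorted size_f; set m := mean L.
have parts : \sum_(xz <- zip L f) (xz.1 - m) * xz.2 <= 0.
  have := @summation_by_parts_le m 0 L f (lexx 0); rewrite mul0r oppr0; apply=> //.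
    by move=> j; rewrite add0r sumr_subr_const subr_ge0.
  by rewrite add0r sumr_sub_mean.
have le_Lf : (size L <= size f)%N by rewrite size_f.
rewrite sqdist_nseq /sqdist.
have expand (xz : R * R) : (xz.1 - xz.2) ^+ 2 = (xz.1 - m) ^+ 2 + (m - xz.2) ^+ 2
    + 2 * m * (xz.1 - m) - 2 * ((xz.1 - m) * xz.2) by ring.
rewrite (eq_bigr _ (fun xz _ => expand xz)) !big_split /=.
rewrite (big_zip_fst (fun x => (x - m) ^+ 2)) // -!mulr_sumr.
rewrite (big_zip_fst (fun x => x - m)) // sumr_sub_mean mulr0 addr0 sumrN -mulr_sumr.
have : 0 <= \sum_(xz <- zip L f) (m - xz.2) ^+ 2 by apply: sumr_ge0 => xz _; exact: sqr_ge0.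
lra.
Qed.

Fixpoint pool_push b stk : seq (seq R) :=
  if stk is c :: stk' then
    if mean b < mean c then pool_push (c ++ b) stk' else b :: stk
  else [:: b].

Lemma map_block_stat_pool_push b stk :
  map block_stat (pool_push b stk) = pava_push (block_stat b) (map block_stat stk).
Proof.
elim: stk b => [|c stk IH] b //=; rewrite /mean; case: ifP => // _.
by rewrite IH /block_stat big_cat size_cat addrC addnC.
Qed.

Definition pooled_stack stk : Prop :=
  (forall L, L \in stk -> prefix_means_ge L) /\ sorted (fun b c => mean c <= mean b) stk.

Lemma pool_push_spec b stk : pooled_stack stk -> prefix_means_ge b ->
  pooled_stack (pool_push b stk) /\ flatten (rev (pool_push b stk)) = flatten (rev stk) ++ b.
Proof.
elim: stk b => [|c stk IH] b.
  by move=> _ b_ok; split; [split=> // L; rewrite inE => /eqP -> | rewrite /= cats0].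
move=> [stk_ok stk_sorted] b_ok /=.
have c_ok : prefix_means_ge c by apply: stk_ok; rewrite inE eqxx.
case: ifP => [lt_bc | ge_bc].
  have stk'_ok : pooled_stack stk.
    split=> [L L_stk|]; last exact: path_sorted stk_sorted.
    by apply: stk_ok; rewrite inE L_stk orbT.
  have [push_ok ->] := IH (c ++ b) stk'_ok (prefix_means_ge_cat c_ok b_ok lt_bc).
  by split; last by rewrite rev_cons flatten_rcons catA.
split; last by rewrite [in LHS]rev_cons flatten_rcons.
split; first by move=> L; rewrite inE => /predU1P [-> | /stk_ok].
by rewrite /= leNgt ge_bc.
Qed.

Definition pool_step stk (x : R) := pool_push [:: x] stk.

Definition pool_blocks ys : seq (seq R) := rev (foldl pool_step [::] ys).

Lemma map_block_stat_foldl ys stk : map block_stat (foldl pool_step stk ys) =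
  foldl (fun st x => pava_push (x, 1%N) st) (map block_stat stk) ys.
Proof.
elim: ys stk => [|x ys IH] stk //=.
by rewrite IH map_block_stat_pool_push /block_stat big_seq1.
Qed.

Lemma pooled_stack_foldl ys stk : pooled_stack stk ->
  pooled_stack (foldl pool_step stk ys) /\
  flatten (rev (foldl pool_step stk ys)) = flatten (rev stk) ++ ys.
Proof.
elim: ys stk => [|x ys IH] stk stk_ok /=; first by rewrite cats0.
have [push_ok push_flat] := pool_push_spec stk_ok (prefix_means_ge1 x).
by have [? ->] := IH _ push_ok; rewrite /pool_step push_flat -catA.
Qed.

Lemma pool_blocks_spec ys :
  [/\ forall L, L \in pool_blocks ys -> prefix_means_ge L,
      sorted <=%R (map mean (pool_blocks ys)) & flatten (pool_blocks ys) = ys].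
Proof.
have nil_ok : pooled_stack [::] by [].
have [[blocks_ok blocks_sorted] ->] := pooled_stack_foldl ys nil_ok.
split=> // [L|]; first by rewrite mem_rev; exact: blocks_ok.
by rewrite map_rev rev_sorted sorted_map.
Qed.

Definition block_fit B : seq R := flatten [seq nseq (size L) (mean L) | L <- B].

Lemma pavaE ys : pava ys = block_fit (pool_blocks ys).
Proof.
rewrite /pava /pava_blocks -[[::]]/(map block_stat [::]) -map_block_stat_foldl.
by rewrite -map_rev -map_comp.
Qed.

Lemma block_fit_cons L B : block_fit (L :: B) = nseq (size L) (mean L) ++ block_fit B.
Proof. by []. Qed.

Lemma size_block_fit B : size (block_fit B) = size (flatten B).
Proof. by elim: B => //= L B IH; rewrite !size_cat size_nseq IH. Qed.

Lemma sorted_block_fit B : sorted <=%R (map mean B) -> sorted <=%R (block_fit B).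
Proof.
rewrite !(sorted_pairwise le_trans); elim: B => //= L B IH /andP [L_min B_sorted].
rewrite pairwise_cat IH // andbT; apply/andP; split.
  apply/allrelP => _ z /nseqP [-> _] /flattenP [_ /mapP [L' L'_B ->] /nseqP [-> _]].
  by move/allP: L_min; apply; apply: map_f.
by elim: (size L) => //= n ->; rewrite andbT; apply/allP => _ /nseqP [-> _].
Qed.

Lemma block_fit_optimal B f : (forall L, L \in B -> prefix_means_ge L) ->
  sorted <=%R f -> size f = size (flatten B) ->
  sqdist (flatten B) (block_fit B) <= sqdist (flatten B) f.
Proof.
elim: B f => [|L B IH] f blocks_ok f_sorted size_f.
  by rewrite (size0nil size_f).
have le_Lf : (size L <= size f)%N by rewrite size_f size_cat leq_addr.
rewrite /= block_fit_cons -(cat_take_drop (size L) f) !sqdist_cat ?size_nseq ?size_takel //.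
apply: lerD; first apply: block_mean_fit_le.
- by apply: blocks_ok; exact: mem_head.
- exact: take_sorted.
- exact: size_takel.
apply: IH.
- by move=> L' L'_B; apply: blocks_ok; rewrite inE L'_B orbT.
- exact: drop_sorted.
- by rewrite size_drop size_f size_cat addKn.
Qed.

Lemma block_fit_level_sum B (Q : pred R) :
  \sum_(xz <- zip (flatten B) (block_fit B) | Q xz.2) xz.1 =
  \sum_(xz <- zip (flatten B) (block_fit B) | Q xz.2) xz.2.
Proof.
elim: B => [|L B IH]; first by rewrite !big_nil.
rewrite block_fit_cons [flatten _]/= zip_cat ?size_nseq // !big_cat IH zip_nseqr !big_map.
congr (_ + _); have [Q_mean | /negbTE Q_mean] := boolP (Q (mean L)).
  rewrite (eq_bigl predT) // (eq_bigl predT) // big_const_seq count_predT iter_addr_0.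
  by rewrite -mulr_natl mulr_size_mean.
by rewrite !big_pred0.
Qed.

Lemma size_pava ys : size (pava ys) = size ys.
Proof. by have [_ _ flat] := pool_blocks_spec ys; rewrite pavaE size_block_fit flat. Qed.

Lemma sorted_pava ys : sorted <=%R (pava ys).
Proof. by have [_ sorted_means _] := pool_blocks_spec ys; rewrite pavaE sorted_block_fit. Qed.

Lemma pava_optimal ys f : sorted <=%R f -> size f = size ys ->
  sqdist ys (pava ys) <= sqdist ys f.
Proof.
have [blocks_ok _ flat] := pool_blocks_spec ys.
rewrite pavaE; move: (pool_blocks ys) blocks_ok flat => B blocks_ok <-.
exact: block_fit_optimal.
Qed.

Lemma pava_level_sum ys (Q : pred R) :
  \sum_(xz <- zip ys (pava ys) | Q xz.2) xz.1 = \sum_(xz <- zip ys (pava ys) | Q xz.2) xz.2.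
Proof.
have [_ _ flat] := pool_blocks_spec ys.
rewrite pavaE; move: (pool_blocks ys) flat => B <-.
exact: block_fit_level_sum.
Qed.

End PoolAdjacentViolators.

Section MkBins.
Variable R : realFieldType.
Implicit Types (a x : R) (cs : seq R).

Lemma mk_bins_ge a cs I x : path <%R a cs -> I \in mk_bins a cs -> x \in I -> a <= x.
Proof.
elim: cs a => [|c cs IH] a /= cs_path.
  by rewrite inE => /eqP ->; rewrite in_itv /= => /andP [].
move/andP: cs_path => [lt_ac cs_path]; rewrite inE => /predU1P [-> | I_bins].
  by rewrite in_itv /= => /andP [].
by move=> x_I; exact: le_trans (ltW lt_ac) (IH c cs_path I_bins x_I).
Qed.

Lemma mk_bins_le1 a cs I x : a <= 1 -> all (<= 1) cs ->
  I \in mk_bins a cs -> x \in I -> x <= 1.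
Proof.
elim: cs a => [|c cs IH] a /= le_a1 cs_le1.
  by rewrite inE => /eqP ->; rewrite in_itv /= => /andP [].
move/andP: cs_le1 => [le_c1 cs_le1]; rewrite inE => /predU1P [-> | I_bins].
  by rewrite in_itv /= => /andP [_ lt_xc]; exact: le_trans (ltW lt_xc) le_c1.
exact: IH le_c1 cs_le1 I_bins.
Qed.

Lemma mk_bins_lt a cs b b' x x' : path <%R a cs -> (b < b')%N ->
  (b' < size (mk_bins a cs))%N -> x \in nth (itv01 R) (mk_bins a cs) b ->
  x' \in nth (itv01 R) (mk_bins a cs) b' -> x < x'.
Proof.
elim: cs a b b' => [|c cs IH] a b b' cs_path lt_bb' lt_b'.
  by move: lt_b' lt_bb' => /=; lia.
move: cs_path => /= /andP [_ cs_path].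
case: b lt_bb' => [|b]; case: b' lt_b' => [|b'] //= lt_b' lt_bb' x_b x_b'.
  move: x_b; rewrite in_itv /= => /andP [_ lt_xc].
  exact: lt_le_trans lt_xc (mk_bins_ge cs_path (mem_nth (itv01 R) lt_b') x_b').
exact: IH c b b' cs_path lt_bb' lt_b' x_b x_b'.
Qed.

Lemma has_mk_bins_both a cs x x' : path <%R a cs -> all (<= 1) cs ->
  a <= x -> x <= x' -> x' <= 1 ->
  has (fun I => (x \in I) && (x' \in I)) (mk_bins a cs) =
  ~~ has (fun c => (x < c) && (c <= x')) cs.
Proof.
elim: cs a => [|c cs IH] a /= cs_path cs_le1 le_ax le_xx' le_x'1.
  by rewrite !in_itv /= le_ax le_x'1 (le_trans le_ax le_xx') (le_trans le_xx' le_x'1).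
move/andP: cs_path => [lt_ac cs_path]; move/andP: cs_le1 => [le_c1 cs_le1].
have c_min := order_path_min lt_trans cs_path.
rewrite !in_itv /=; case: (ltP x' c) => [lt_x'c | le_cx'].
  rewrite le_ax (le_trans le_ax le_xx') (le_lt_trans le_xx' lt_x'c) /=.
  apply/esym/hasPn => c' c'_cs; have lt_cc' := allP c_min c' c'_cs.
  by rewrite (leNgt c') (lt_trans lt_x'c lt_cc') andbF.
rewrite !andbF /=; case: (ltP x c) => [lt_xc | le_cx]; last exact: IH.
apply/negbTE/hasPn => I I_bins; apply/negP => /andP [x_I _].
by have := mk_bins_ge cs_path I_bins x_I; rewrite leNgt lt_xc.
Qed.

Lemma mk_bins_binning cs : path <%R 0 cs -> all (<= 1) cs -> is_binning (mk_bins 0 cs).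
Proof.
move=> cs_path cs_le1; split.
- move=> x; split.
    rewrite /itv01 in_itv /= => /andP [ge_x0 le_x1].
    have := has_mk_bins_both cs_path cs_le1 ge_x0 (lexx x) le_x1.
    have -> : has (fun c => (x < c) && (c <= x)) cs = false.
      by apply/hasPn => c _; apply/negP => /andP [/lt_geF ->].
    by move=> /(has_nthP (itv01 R)) [b lt_b /andP [x_b _]]; exists b.
  move=> [b lt_b x_b]; rewrite /itv01 in_itv /=; apply/andP; split.
    exact: mk_bins_ge cs_path (mem_nth (itv01 R) lt_b) x_b.
  exact: mk_bins_le1 ler01 cs_le1 (mem_nth (itv01 R) lt_b) x_b.
- move=> b b' x lt_b lt_b' x_b x_b'; case: (ltngtP b b') => // lt_bb'.
    by have := mk_bins_lt cs_path lt_bb' lt_b' x_b x_b'; rewrite ltxx.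
  by have := mk_bins_lt cs_path lt_bb' lt_b x_b' x_b; rewrite ltxx.
- by move=> b b' x x' lt_bb' lt_b'; exact: mk_bins_lt.
Qed.

End MkBins.

Section Binnings.
Variables (R : realFieldType) (N : nat) (p : 'I_N -> R) (y : 'I_N -> bool).
Hypothesis p01 : forall i, 0 <= p i <= 1.
Implicit Types bins : seq (interval R).

Definition bin_of bins i : nat := find (fun I => p i \in I) bins.

Lemma bin_ofP bins i : is_binning bins ->
  (bin_of bins i < size bins)%N /\ p i \in nth (itv01 R) bins (bin_of bins i).
Proof.
move=> [cover _ _].
have has_i : has (fun I => p i \in I) bins.
  have [b lt_b p_b] := proj1 (cover (p i)) (p01 i).
  by apply/(has_nthP (itv01 R)); exists b.
by split; [rewrite /bin_of -has_find | exact: nth_find].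
Qed.

Lemma mem_nth_bin bins i b : is_binning bins -> (b < size bins)%N ->
  (p i \in nth (itv01 R) bins b) = (b == bin_of bins i).
Proof.
move=> bins_ok lt_b; have [lt_bin p_bin] := bin_ofP i bins_ok.
apply/idP/eqP => [p_b | b_bin]; last by rewrite b_bin.
have [_ disjoint _] := bins_ok.
exact: disjoint _ _ _ lt_b lt_bin p_b p_bin.
Qed.

Definition bin_Phat bins i : R := Phat p y (nth (itv01 R) bins (bin_of bins i)).

Lemma objectiveE bins : is_binning bins ->
  objective p y bins = (\sum_i (yv R y i - bin_Phat bins i) ^+ 2) / N%:R.
Proof.
move=> bins_ok.
have bin_term I : (Nb p I)%:R / N%:R * Dvar p y I =
    (\sum_(i | p i \in I) (yv R y i - Phat p y I) ^+ 2) / N%:R.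
  rewrite /Dvar; have [Nb0 | Nb_neq0] := eqVneq (Nb p I) 0%N.
    rewrite Nb0 mul0r big_pred0 ?mul0r // => i.
    by have := card0_eq Nb0 i; rewrite !inE.
  by rewrite mulrC mulrA divfK // pnatr_eq0.
rewrite /objective (eq_bigr _ (fun I _ => bin_term I)) -mulr_suml; congr (_ / _).
under eq_bigr do rewrite big_mkcond.
rewrite exchange_big; apply: eq_bigr => i _ /=.
have [lt_bin _] := bin_ofP i bins_ok.
rewrite (big_nth (itv01 R)) big_mkord (bigD1 (Ordinal lt_bin)) //= big1 ?addr0.
  by rewrite mem_nth_bin // eqxx.
move=> b neq_b; rewrite mem_nth_bin //.
by case: eqP => // eq_b; case/eqP: neq_b; apply: val_inj.
Qed.

Lemma bin_Phat_mono bins i j : feasible p y bins -> p i < p j ->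
  bin_Phat bins i <= bin_Phat bins j.
Proof.
move=> [bins_ok mono] lt_ij.
have [lt_bi p_bi] := bin_ofP i bins_ok; have [lt_bj p_bj] := bin_ofP j bins_ok.
have [_ _ ordered] := bins_ok.
rewrite /bin_Phat; case: (ltngtP (bin_of bins i) (bin_of bins j)) => [lt_b | lt_b | ->] //.
  by apply: mono => //; apply/card_gt0P; [exists i | exists j]; rewrite inE.
by have := ordered _ _ _ _ lt_b lt_bi p_bj p_bi; rewrite ltNge (ltW lt_ij).
Qed.

End Binnings.

Lemma map_nth_index (T : eqType) (U : Type) (d : U) (s : seq T) (t : seq U) :
  uniq s -> size t = size s -> [seq nth d t (index x s) | x <- s] = t.
Proof.
elim: s t => [|x s IH] [|z t] //= /andP [x_s s_uniq] [size_t].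
rewrite eqxx; congr (_ :: _); rewrite -[RHS](IH t s_uniq size_t).
apply/eq_in_map => x' x'_s /=; case: eqVneq => // eq_xx'.
by move: x_s; rewrite eq_xx' x'_s.
Qed.

Lemma exists_neq_step (T : eqType) (g : nat -> T) k k' :
  (k <= k')%N -> g k != g k' -> exists2 K, (k < K <= k')%N & g K.-1 != g K.
Proof.
elim: k' => [|k' IH]; first by rewrite leqn0 => /eqP ->; rewrite eqxx.
rewrite leq_eqVlt => /predU1P [-> | lt_k]; first by rewrite eqxx.
have [eq_g neq_g | neq_step] := eqVneq (g k') (g k'.+1).
  have [|K /andP [lt_kK le_K] neq_K] := IH lt_k; first by rewrite eq_g.
  by exists K; rewrite ?lt_kK ?(leq_trans le_K).
by exists k'.+1; rewrite ?lt_k ?leqnn.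
Qed.

Section PavaBins.
Variables (R : realFieldType) (N : nat) (p : 'I_N -> R) (y : 'I_N -> bool).
Hypotheses (p01 : forall i, 0 <= p i <= 1) (p_inj : injective p).

Local Notation s := (sorted_idx p).
Local Notation ps := [seq p i | i <- s].
Local Notation ys := [seq yv R y i | i <- s].
Local Notation yh := (pava ys).
Local Notation midpoint k := ((ps`_k.-1 + ps`_k) / 2).
Local Notation cut_idx := [seq k <- iota 1 N.-1 | yh`_k.-1 != yh`_k].
Local Notation cuts := [seq midpoint k | k <- cut_idx].

Lemma pava_binsE : pava_bins p y = mk_bins 0 cuts.
Proof. by []. Qed.

Lemma size_sorted_idx : size s = N.
Proof. by rewrite size_sort size_enum_ord. Qed.

Lemma uniq_sorted_idx : uniq s.
Proof. by rewrite sort_uniq enum_uniq. Qed.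

Lemma mem_sorted_idx i : i \in s.
Proof. by rewrite mem_sort mem_enum. Qed.

Lemma big_sorted_idx (P : pred 'I_N) (F : 'I_N -> R) :
  \sum_(i | P i) F i = \sum_(i <- s | P i) F i.
Proof.
apply: perm_big; apply: uniq_perm; rewrite ?index_enum_uniq ?uniq_sorted_idx // => i.
by rewrite mem_index_enum mem_sorted_idx.
Qed.

Lemma size_ps : size ps = N.
Proof. by rewrite size_map size_sorted_idx. Qed.

Lemma size_yh : size yh = N.
Proof. by rewrite size_pava size_map size_sorted_idx. Qed.

Lemma sorted_ps : sorted <%R ps.
Proof.
rewrite lt_sorted_uniq_le map_inj_uniq // uniq_sorted_idx sorted_map.
by apply: sort_sorted => i j; exact: le_total.
Qed.

Lemma ps_lt k l : (k < l)%N -> (l < N)%N -> ps`_k < ps`_l.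
Proof.
move=> lt_kl lt_l.
by rewrite (lt_sorted_ltn_nth 0 sorted_ps) // inE size_ps // (ltn_trans lt_kl lt_l).
Qed.

Lemma ps_le k l : (k <= l)%N -> (l < N)%N -> ps`_k <= ps`_l.
Proof.
move=> le_kl lt_l.
by rewrite (lt_sorted_leq_nth 0 sorted_ps) // inE size_ps // (leq_ltn_trans le_kl lt_l).
Qed.

Lemma ps01 k : (k < N)%N -> 0 <= ps`_k <= 1.
Proof.
move=> lt_k; have /mapP [i _ ->] : ps`_k \in ps by rewrite mem_nth ?size_ps.
exact: p01.
Qed.

Lemma index_sorted_idx_lt i : (index i s < N)%N.
Proof. by move: (index_mem i s); rewrite size_sorted_idx mem_sorted_idx. Qed.

Lemma nth_ps_index i : ps`_(index i s) = p i.
Proof.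
by rewrite (nth_map i) ?nth_index ?mem_sorted_idx // size_sorted_idx index_sorted_idx_lt.
Qed.

Lemma leq_index_sorted_idx i j : (index i s <= index j s)%N = (p i <= p j).
Proof.
by rewrite -!nth_ps_index (lt_sorted_leq_nth 0 sorted_ps) // inE size_ps index_sorted_idx_lt.
Qed.

Lemma yh_le k l : (k <= l)%N -> (l < N)%N -> yh`_k <= yh`_l.
Proof.
move=> le_kl lt_l; apply: (sorted_leq_nth le_trans lexx 0 (sorted_pava ys)) => //.
  by rewrite inE size_yh (leq_ltn_trans le_kl lt_l).
by rewrite inE size_yh.
Qed.

Definition fitted i : R := yh`_(index i s).

Lemma map_fitted : map fitted s = yh.
Proof. by apply: map_nth_index; rewrite ?uniq_sorted_idx // size_yh size_sorted_idx. Qed.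

Lemma fitted_le i j : p i <= p j -> fitted i <= fitted j.
Proof.
by rewrite -leq_index_sorted_idx => le_ij; apply: yh_le => //; exact: index_sorted_idx_lt.
Qed.

Lemma midpoint_between K : (0 < K)%N -> (K < N)%N ->
  ps`_K.-1 < midpoint K /\ midpoint K < ps`_K.
Proof. by move=> K_gt0 lt_K; have [] := midf_lt (@ps_lt K.-1 K ltac:(lia) lt_K). Qed.

Lemma mem_cut_idx K : (K \in cut_idx) = [&& yh`_K.-1 != yh`_K, (0 < K)%N & (K < N)%N].
Proof. by rewrite mem_filter mem_iota; case: (_ != _) => //=; apply/idP/idP; lia. Qed.

Lemma path_cuts : path <%R 0 cuts.
Proof.
have cut_idx_ok : all (fun K => (0 < K < N)%N) cut_idx.
  by apply/allP => K; rewrite mem_cut_idx => /and3P [_ -> ->].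
rewrite (path_sortedE lt_trans); apply/andP; split.
  apply/allP => c /mapP [K]; rewrite mem_cut_idx => /and3P [_ K_gt0 lt_K] ->.
  have [lt_mid _] := midpoint_between K_gt0 lt_K.
  by have /andP [ge0 _] := @ps01 K.-1 ltac:(lia); exact: le_lt_trans ge0 lt_mid.
rewrite sorted_map; apply: (sub_in_sorted (e := ltn) _ cut_idx_ok).
  move=> K1 K2 /andP [K1_gt0 lt_K1] /andP [K2_gt0 lt_K2] lt_K12 /=.
  have [_ lt_mid1] := midpoint_between K1_gt0 lt_K1.
  have [lt_mid2 _] := midpoint_between K2_gt0 lt_K2.
  exact: lt_trans lt_mid1 (le_lt_trans (@ps_le K1 K2.-1 ltac:(lia) ltac:(lia)) lt_mid2).
by apply: sorted_filter; [exact: ltn_trans | exact: iota_ltn_sorted].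
Qed.

Lemma cuts_le1 : all (<= 1) cuts.
Proof.
apply/allP => c /mapP [K]; rewrite mem_cut_idx => /and3P [_ K_gt0 lt_K] ->.
have [_ lt_mid] := midpoint_between K_gt0 lt_K; have /andP [_ le1] := ps01 lt_K.
exact: ltW (lt_le_trans lt_mid le1).
Qed.

Lemma has_cut_between k k' : (k <= k')%N -> (k' < N)%N ->
  has (fun c => (ps`_k < c) && (c <= ps`_k')) cuts = (yh`_k != yh`_k').
Proof.
move=> le_kk' lt_k'; apply/hasP/idP.
  move=> [c /mapP [K]]; rewrite mem_cut_idx => /and3P [jump K_gt0 lt_K] ->.
  move=> /andP [lt_k le_k'].
  have [lt_mid mid_lt] := midpoint_between K_gt0 lt_K.
  have lt_kK : (k < K)%N.
    rewrite ltnNge; apply/negP => le_Kk.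
    have lt_k_N := leq_ltn_trans le_kk' lt_k'.
    by have := lt_le_trans (lt_trans lt_k mid_lt) (ps_le le_Kk lt_k_N); rewrite ltxx.
  have le_Kk' : (K <= k')%N.
    rewrite leqNgt; apply/negP => lt_k'K.
    have le_k'_K1 : ps`_k' <= ps`_K.-1 by apply: ps_le; lia.
    by have := le_lt_trans le_k' (le_lt_trans le_k'_K1 lt_mid); rewrite ltxx.
  apply: contra jump => /eqP eq_yh; rewrite eq_le yh_le ?leq_pred //=.
  by apply: le_trans (yh_le le_Kk' lt_k') _; rewrite -eq_yh yh_le //; lia.
move=> /(exists_neq_step (g := fun k => yh`_k) le_kk') [K /andP [lt_kK le_Kk'] jump].
have K_gt0 : (0 < K)%N by lia.
have lt_K : (K < N)%N by lia.
exists (midpoint K); first by apply: map_f; rewrite mem_cut_idx jump K_gt0 lt_K.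
have [lt_mid mid_lt] := midpoint_between K_gt0 lt_K.
have le_k_K1 : ps`_k <= ps`_K.-1 by apply: ps_le; lia.
by rewrite (le_lt_trans le_k_K1 lt_mid) (ltW (lt_le_trans mid_lt (ps_le le_Kk' lt_k'))).
Qed.

Lemma pava_bins_binning : is_binning (pava_bins p y).
Proof. exact: mk_bins_binning path_cuts cuts_le1. Qed.

Lemma same_pava_bin i j :
  has (fun I => (p i \in I) && (p j \in I)) (pava_bins p y) = (fitted i == fitted j).
Proof.
wlog le_ij : i j / p i <= p j.
  move=> wlog_ij; case: (leP (p i) (p j)) => [|/ltW le_ji]; first exact: wlog_ij.
  by rewrite eq_sym -wlog_ij //; apply: eq_has => I; rewrite andbC.
have lt_i := index_sorted_idx_lt i; have lt_j := index_sorted_idx_lt j.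
have /andP [ge0_i _] := ps01 lt_i; have /andP [_ le1_j] := ps01 lt_j.
rewrite -leq_index_sorted_idx in le_ij.
rewrite pava_binsE -!nth_ps_index has_mk_bins_both ?path_cuts ?cuts_le1 ?ps_le //.
by rewrite has_cut_between // negbK.
Qed.

Lemma mem_pava_bin b i j : (b < size (pava_bins p y))%N ->
  p i \in nth (itv01 R) (pava_bins p y) b ->
  (p j \in nth (itv01 R) (pava_bins p y) b) = (fitted j == fitted i).
Proof.
move=> lt_b p_i; rewrite -same_pava_bin.
apply/idP/(has_nthP (itv01 R)) => [p_j | [b' lt_b' /andP [p_j p_i']]].
  by exists b; rewrite ?p_j.
by have [_ disjoint _] := pava_bins_binning; rewrite (disjoint _ _ _ lt_b lt_b' p_i p_i').
Qed.

Lemma sum_fitted_level (v : R) :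
  \sum_(j <- s | fitted j == v) yv R y j = \sum_(j <- s | fitted j == v) fitted j.
Proof. by have := pava_level_sum ys (pred1 v); rewrite -map_fitted zip_map !big_map. Qed.

Lemma Phat_pava_bin b i : (b < size (pava_bins p y))%N ->
  p i \in nth (itv01 R) (pava_bins p y) b ->
  Phat p y (nth (itv01 R) (pava_bins p y) b) = fitted i.
Proof.
move=> lt_b p_i; set I := nth _ _ b.
have in_I j : (p j \in I) = (fitted j == fitted i) := mem_pava_bin j lt_b p_i.
have Nb_gt0 : (0 < Nb p I)%N by apply/card_gt0P; exists i; rewrite inE.
have Nb_sum : (Nb p I)%:R = \sum_(j <- s | fitted j == fitted i) (1 : R).
  by rewrite /Nb -sumr_const -big_sorted_idx; apply: eq_bigl => j; rewrite inE /= in_I.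
rewrite /Phat (eq_bigl _ _ in_I) big_sorted_idx sum_fitted_level.
rewrite (eq_bigr (fun _ => fitted i * 1)) => [|j /eqP ->]; last by rewrite mulr1.
by rewrite -mulr_sumr -Nb_sum mulfK // pnatr_eq0 -lt0n.
Qed.

Lemma bin_Phat_pava_bins i : bin_Phat p y (pava_bins p y) i = fitted i.
Proof. by have [] := bin_ofP p01 i pava_bins_binning; exact: Phat_pava_bin. Qed.

Lemma pava_bins_feasible : feasible p y (pava_bins p y).
Proof.
split=> [|b b' lt_bb' lt_b']; first exact: pava_bins_binning.
move=> /card_gt0P [i]; rewrite inE => p_i /card_gt0P [j]; rewrite inE => p_j.
rewrite (Phat_pava_bin (ltn_trans lt_bb' lt_b') p_i) (Phat_pava_bin lt_b' p_j).
have [_ _ ordered] := pava_bins_binning.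
exact/fitted_le/ltW/(ordered _ _ _ _ lt_bb' lt_b' p_i p_j).
Qed.

Lemma objective_sorted_idx bins : is_binning bins ->
  objective p y bins = sqdist ys (map (bin_Phat p y bins) s) / N%:R.
Proof. by move=> bins_ok; rewrite objectiveE // big_sorted_idx /sqdist zip_map big_map. Qed.

Lemma objective_pava_bins : objective p y (pava_bins p y) = sqdist ys yh / N%:R.
Proof.
rewrite objective_sorted_idx; last exact: pava_bins_binning.
by rewrite -map_fitted (eq_map bin_Phat_pava_bins).
Qed.

Lemma pava_objective_le bins : feasible p y bins ->
  sqdist ys yh / N%:R <= objective p y bins.
Proof.
move=> feas; rewrite objective_sorted_idx; last exact: feas.1.
apply: ler_wpM2r; first by rewrite invr_ge0 ler0n.
apply: pava_optimal; last by rewrite !size_map.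
rewrite sorted_map; apply: sub_sorted (sort_sorted (fun i j => le_total (p i) (p j)) _).
move=> i j /=; rewrite le_eqVlt => /predU1P [/p_inj -> // | lt_ij].
exact: bin_Phat_mono.
Qed.

End PavaBins.

Unset Implicit Arguments.
Set Strict Implicit.

Theorem mainTheorem1 (R : realFieldType) (N : nat) (p : 'I_N -> R) (y : 'I_N -> bool)
  (hp : forall i, 0 <= p i <= 1)
  (hinj : injective p)
  (hnontriv : ~ is_optimal p y [:: itv01 R]) :
  is_optimal p y (pava_bins p y).
Proof.
split; first exact: pava_bins_feasible y hp hinj.
move=> bins feas; rewrite (objective_pava_bins y hp hinj).
exact: (pava_objective_le hp hinj feas).
Qed.
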